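(* Let $\Psi^D$ be a zero Floquet eigenfunction of $L$ with multipliers $(\hat\kappa_1,\hat\kappa_2)$ and $\Phi^D$ a zero Floquet eigenfunction of $L^\vee$ with multipliers $(1/\hat\kappa_1,1/\hat\kappa_2)$. Define the $\Lambda$-periodic functions $$\delta p=-\Psi^D_1\Phi^D_2,\qquad \delta q=\Psi^D_2\Phi^D_1,$$ and the matrix operators $$\delta L=\begin{pmatrix}0&\Psi^D_1\Phi^D_2\\ -\Psi^D_2\Phi^D_1&0\end{pmatrix},\qquad \delta L^\vee=\begin{pmatrix}0&-\Psi^D_2\Phi^D_1\\ \Psi^D_1\Phi^D_2&0\end{pmatrix},$$ i.e. the variations of $L$ and $L^\vee$ induced by $p\mapsto p+\delta p$, $q\mapsto q+\delta q$. 1. For every solution $\psi$ of $L\psi=0$ and every primitive $\omega$ of $d\omega=\Phi^D_1\psi_1\,dz-\Phi^D_2\psi_2\,d\bar z$, the function $\delta\psi=\omega\Psi^D$ satisfies $L\,\delta\psi+\delta L\,\psi=0$. For every solution $\phi$ of $L^\vee\phi=0$ and every primitive $\omega^\vee$ of $d\omega^\vee=\phi_1\Psi^D_1\,dz-\phi_2\Psi^D_2\,d\bar z$, the function $\delta\phi=\omega^\vee\Phi^D$ satisfies $L^\vee\delta\phi+\delta L^\vee\phi=0$. (Thus $(L+\varepsilon\delta L)(\psi+\varepsilon\delta\psi)=O(\varepsilon^2)$ and $(L^\vee+\varepsilon\delta L^\vee)(\phi+\varepsilon\delta\phi)=O(\varepsilon^2)$, with the same variation of the potentials for all such $\psi,\phi$.)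 2. If moreover $\psi$ is a zero Floquet eigenfunction of $L$ with multipliers $(\kappa_1,\kappa_2)$ such that $\kappa_1/\hat\kappa_1\ne1$ or $\kappa_2/\hat\kappa_2\ne1$, and $\omega$ is the unique primitive with $\omega(z+\gamma_i)=\frac{\kappa_i}{\hat\kappa_i}\omega(z)$, then $\delta\psi$ satisfies $\delta\psi(z+\gamma_i)=\kappa_i\,\delta\psi(z)$, $i=1,2$. Likewise, if $\phi$ is a zero Floquet eigenfunction of $L^\vee$ with multipliers $(\kappa^\vee_1,\kappa^\vee_2)$ such that $\kappa^\vee_1\hat\kappa_1\neq1$ or $\kappa^\vee_2\hat\kappa_2\ne1$, and $\omega^\vee$ is the unique primitive with $\omega^\vee(z+\gamma_i)=\kappa^\vee_i\hat\kappa_i\,\omega^\vee(z)$, then $\delta\phi(z+\gamma_i)=\kappa^\vee_i\,\delta\phi(z)$. In other words the variation preserves the Floquet property and does not change the multipliers.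
   Context: $\Lambda\subset\mathbb{C}$ is a lattice with generators $\gamma_1,\gamma_2$; $p,q$ are smooth complex-valued $\Lambda$-periodic functions on $\mathbb{C}$; $\partial=\partial/\partial z$, $\bar\partial=\partial/\partial\bar z$; $$L=\begin{pmatrix}\bar\partial & -p\\ -q & \partial\end{pmatrix},\qquad L^\vee=\begin{pmatrix}-\bar\partial & -q\\ -p & -\partial\end{pmatrix}.$$ A zero Floquet eigenfunction of $A\in\{L,L^\vee\}$ with multipliers $(\kappa_1,\kappa_2)\in(\mathbb{C}\setminus\{0\})^2$ is a nonzero smooth $\psi:\mathbb{C}\to\mathbb{C}^2$ with $A\psi=0$ and $\psi(z+\gamma_i)=\kappa_i\psi(z)$, $i=1,2$. For solutions $\psi$ of $L\psi=0$ and $\phi$ of $L^\vee\phi=0$, the 1-forms $\Phi^D_1\psi_1dz-\Phi^D_2\psi_2d\bar z$ and $\phi_1\Psi^D_1dz-\phi_2\Psi^D_2d\bar z$ are closed, so they have primitives on $\mathbb{C}$. *)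

From Stdlib Require Import Reals List.
From Coquelicot Require Import Coquelicot.
Open Scope R_scope.

Definition Iu : C := (0, 1)%R.

Definition pdx (f : C -> C) (z : C) : C :=
  (Derive (fun t => Re (f (t, Im z))) (Re z),
   Derive (fun t => Im (f (t, Im z))) (Re z)).
Definition pdy (f : C -> C) (z : C) : C :=
  (Derive (fun t => Re (f (Re z, t))) (Im z),
   Derive (fun t => Im (f (Re z, t))) (Im z)).

Definition has_partials (f : C -> C) (z : C) : Prop :=
  ex_derive (fun t => Re (f (t, Im z))) (Re z) /\
  ex_derive (fun t => Im (f (t, Im z))) (Re z) /\
  ex_derive (fun t => Re (f (Re z, t))) (Im z) /\
  ex_derive (fun t => Im (f (Re z, t))) (Im z).

Definition wd (f : C -> C) (z : C) : C :=
  Cmult (/ 2)%R (Cminus (pdx f z) (Cmult Iu (pdy f z))).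
Definition wdbar (f : C -> C) (z : C) : C :=
  Cmult (/ 2)%R (Cplus (pdx f z) (Cmult Iu (pdy f z))).

Definition iterD (l : list bool) (f : C -> C) : C -> C :=
  fold_right (fun (b : bool) (g : C -> C) => if b then pdx g else pdy g) f l.

Definition smooth (f : C -> C) : Prop :=
  forall (l : list bool) (z : C),
    has_partials (iterD l f) z /\ continuous (iterD l f) z.

(* Lattice generated by g1, g2 (R-linearly independent). *)
Definition lattice_gens (g1 g2 : C) : Prop := Im (Cmult (Cconj g1) g2) <> 0.

Definition periodic (g1 g2 : C) (f : C -> C) : Prop :=
  forall z, f (Cplus z g1) = f z /\ f (Cplus z g2) = f z.

Definition floquet1 (g1 g2 k1 k2 : C) (f : C -> C) : Prop :=
  forall z, f (Cplus z g1) = Cmult k1 (f z) /\ f (Cplus z g2) = Cmult k2 (f z).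

Definition L1 (p q psi1 psi2 : C -> C) (z : C) : C :=
  Cminus (wdbar psi1 z) (Cmult (p z) (psi2 z)).
Definition L2 (p q psi1 psi2 : C -> C) (z : C) : C :=
  Cplus (Copp (Cmult (q z) (psi1 z))) (wd psi2 z).
Definition Lv1 (p q phi1 phi2 : C -> C) (z : C) : C :=
  Cminus (Copp (wdbar phi1 z)) (Cmult (q z) (phi2 z)).
Definition Lv2 (p q phi1 phi2 : C -> C) (z : C) : C :=
  Cminus (Copp (Cmult (p z) (phi1 z))) (wd phi2 z).

Definition solves_L (p q psi1 psi2 : C -> C) : Prop :=
  smooth psi1 /\ smooth psi2 /\
  forall z, L1 p q psi1 psi2 z = RtoC 0 /\ L2 p q psi1 psi2 z = RtoC 0.
Definition solves_Lv (p q phi1 phi2 : C -> C) : Prop :=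
  smooth phi1 /\ smooth phi2 /\
  forall z, Lv1 p q phi1 phi2 z = RtoC 0 /\ Lv2 p q phi1 phi2 z = RtoC 0.

Definition floquet_L (g1 g2 : C) (p q : C -> C) (k1 k2 : C) (psi1 psi2 : C -> C) : Prop :=
  solves_L p q psi1 psi2 /\
  (exists z, psi1 z <> RtoC 0 \/ psi2 z <> RtoC 0) /\
  k1 <> RtoC 0 /\ k2 <> RtoC 0 /\
  floquet1 g1 g2 k1 k2 psi1 /\ floquet1 g1 g2 k1 k2 psi2.
Definition floquet_Lv (g1 g2 : C) (p q : C -> C) (k1 k2 : C) (phi1 phi2 : C -> C) : Prop :=
  solves_Lv p q phi1 phi2 /\
  (exists z, phi1 z <> RtoC 0 \/ phi2 z <> RtoC 0) /\
  k1 <> RtoC 0 /\ k2 <> RtoC 0 /\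
  floquet1 g1 g2 k1 k2 phi1 /\ floquet1 g1 g2 k1 k2 phi2.

(* omega is a primitive of the 1-form  a dz + b dzbar on C, i.e. d omega = a dz + b dzbar:
   omega has real partial derivatives everywhere with  d omega = a, dbar omega = b. *)
Definition is_prim (a b omega : C -> C) : Prop :=
  forall z, has_partials omega z /\ wd omega z = a z /\ wdbar omega z = b z.

From Stdlib Require Import Reals Lra FunctionalExtensionality.
From Coquelicot Require Import Coquelicot.
Open Scope R_scope.

(* By the Leibniz rule, L (omega Psi^D) = omega L Psi^D + (dbar omega Psi^D_1, d omega Psi^D_2), and
   the first term vanishes while the second is exactly - dL psi once d omega is the given 1-form.
   For the Floquet part, the 1-form has multipliers m_i = kappa_i / kappa^_i and is closed, so it has
   an explicit potential W (integration along a broken line).  Then W(z + gamma_i) - m_i W(z) has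
   zero differential, hence is a constant c_i; since the two translations commute and some m_i <> 1,
   a single constant shift of W turns it into a Floquet function.  Two such primitives differ by a
   constant c with m_i c = c, hence coincide. *)

Lemma is_derive_eq (f : R -> R) (x l l' : R) : is_derive f x l -> l = l' -> is_derive f x l'.
Proof. intros H <-; exact H. Qed.

Lemma is_derive_const_R (c x : R) : is_derive (fun _ : R => c) x 0.
Proof. apply (is_derive_const (K := R_AbsRing) (V := R_NormedModule)). Qed.

Lemma is_derive_plus_R (f g : R -> R) (x a b : R) :
  is_derive f x a -> is_derive g x b -> is_derive (fun t => f t + g t) x (a + b).
Proof. intros; apply (is_derive_plus f g); assumption. Qed.

Lemma is_derive_minus_R (f g : R -> R) (x a b : R) :
  is_derive f x a -> is_derive g x b -> is_derive (fun t => f t - g t) x (a - b).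
Proof. intros; apply (is_derive_minus f g); assumption. Qed.

Lemma is_derive_opp_R (f : R -> R) (x a : R) :
  is_derive f x a -> is_derive (fun t => - f t) x (- a).
Proof. intros; apply (is_derive_opp f); assumption. Qed.

Lemma is_derive_mult_R (f g : R -> R) (x a b : R) :
  is_derive f x a -> is_derive g x b -> is_derive (fun t => f t * g t) x (a * g x + f x * b).
Proof. intros; apply (is_derive_mult f g); auto. intros; apply Rmult_comm. Qed.

Definition is_derive_C (F : R -> C) (x : R) (l : C) : Prop :=
  is_derive (fun t => Re (F t)) x (Re l) /\ is_derive (fun t => Im (F t)) x (Im l).

Lemma is_derive_C_const (c : C) x : is_derive_C (fun _ => c) x (RtoC 0).
Proof. split; apply is_derive_const_R. Qed.

Lemma is_derive_C_plus F G x a b : is_derive_C F x a -> is_derive_C G x b ->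
  is_derive_C (fun t => Cplus (F t) (G t)) x (Cplus a b).
Proof.
  intros [Fr Fi] [Gr Gi]; split.
  - apply (is_derive_plus_R (fun t => Re (F t)) (fun t => Re (G t))); assumption.
  - apply (is_derive_plus_R (fun t => Im (F t)) (fun t => Im (G t))); assumption.
Qed.

Lemma is_derive_C_opp F x a : is_derive_C F x a -> is_derive_C (fun t => Copp (F t)) x (Copp a).
Proof.
  intros [Fr Fi]; split.
  - apply (is_derive_opp_R (fun t => Re (F t))); assumption.
  - apply (is_derive_opp_R (fun t => Im (F t))); assumption.
Qed.

Lemma is_derive_C_mult F G x a b : is_derive_C F x a -> is_derive_C G x b ->
  is_derive_C (fun t => Cmult (F t) (G t)) x (Cplus (Cmult a (G x)) (Cmult (F x) b)).
Proof.
  intros [Fr Fi] [Gr Gi]; split.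
  - eapply is_derive_eq.
    + apply is_derive_minus_R; apply is_derive_mult_R; eassumption.
    + unfold Re, Im; simpl; ring.
  - eapply is_derive_eq.
    + apply is_derive_plus_R; apply is_derive_mult_R; eassumption.
    + unfold Re, Im; simpl; ring.
Qed.

Lemma is_derive_shift_R (f : R -> R) (x c l : R) :
  is_derive f (x + c) l -> is_derive (fun t => f (t + c)) x l.
Proof.
  intros Hf. assert (Hc : is_derive (fun t : R => t + c) x 1) by (auto_derive; auto; ring).
  eapply is_derive_eq; [apply (is_derive_comp f (fun t => t + c)); eassumption|].
  change (1 * l = l); ring.
Qed.

Lemma is_derive_C_shift F x c l :
  is_derive_C F (x + c) l -> is_derive_C (fun t => F (t + c)) x l.
Proof.
  intros [Fr Fi]; split;
    [apply (is_derive_shift_R (fun t => Re (F t))) | apply (is_derive_shift_R (fun t => Im (F t)))];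
    assumption.
Qed.

Definition is_pdx (f : C -> C) (z l : C) : Prop := is_derive_C (fun t => f (t, Im z)) (Re z) l.
Definition is_pdy (f : C -> C) (z l : C) : Prop := is_derive_C (fun t => f (Re z, t)) (Im z) l.

Lemma is_pdx_eq f z l l' : is_pdx f z l -> l = l' -> is_pdx f z l'.
Proof. intros H <-; exact H. Qed.
Lemma is_pdy_eq f z l l' : is_pdy f z l -> l = l' -> is_pdy f z l'.
Proof. intros H <-; exact H. Qed.

Lemma is_pdx_const c z : is_pdx (fun _ => c) z (RtoC 0).
Proof. apply is_derive_C_const. Qed.
Lemma is_pdy_const c z : is_pdy (fun _ => c) z (RtoC 0).
Proof. apply is_derive_C_const. Qed.

Lemma is_pdx_plus f g z a b :
  is_pdx f z a -> is_pdx g z b -> is_pdx (fun w => Cplus (f w) (g w)) z (Cplus a b).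
Proof. apply is_derive_C_plus. Qed.
Lemma is_pdy_plus f g z a b :
  is_pdy f z a -> is_pdy g z b -> is_pdy (fun w => Cplus (f w) (g w)) z (Cplus a b).
Proof. apply is_derive_C_plus. Qed.

Lemma is_pdx_opp f z a : is_pdx f z a -> is_pdx (fun w => Copp (f w)) z (Copp a).
Proof. apply is_derive_C_opp. Qed.
Lemma is_pdy_opp f z a : is_pdy f z a -> is_pdy (fun w => Copp (f w)) z (Copp a).
Proof. apply is_derive_C_opp. Qed.

Lemma is_pdx_mult f g z a b : is_pdx f z a -> is_pdx g z b ->
  is_pdx (fun w => Cmult (f w) (g w)) z (Cplus (Cmult a (g z)) (Cmult (f z) b)).
Proof. destruct z as [x y]; apply is_derive_C_mult. Qed.
Lemma is_pdy_mult f g z a b : is_pdy f z a -> is_pdy g z b ->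
  is_pdy (fun w => Cmult (f w) (g w)) z (Cplus (Cmult a (g z)) (Cmult (f z) b)).
Proof. destruct z as [x y]; apply is_derive_C_mult. Qed.

Lemma is_pdx_shift f g z l : is_pdx f (Cplus z g) l -> is_pdx (fun w => f (Cplus w g)) z l.
Proof. destruct z as [x y], g as [gx gy]; apply is_derive_C_shift. Qed.
Lemma is_pdy_shift f g z l : is_pdy f (Cplus z g) l -> is_pdy (fun w => f (Cplus w g)) z l.
Proof. destruct z as [x y], g as [gx gy]; apply is_derive_C_shift. Qed.

Lemma has_partials_is_pdx f z : has_partials f z -> is_pdx f z (pdx f z).
Proof. intros [H1 [H2 _]]; split; apply Derive_correct; assumption. Qed.
Lemma has_partials_is_pdy f z : has_partials f z -> is_pdy f z (pdy f z).
Proof. intros [_ [_ [H3 H4]]]; split; apply Derive_correct; assumption. Qed.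

Lemma is_pdx_unique f z l : is_pdx f z l -> pdx f z = l.
Proof.
  destruct l as [l1 l2]; intros [H1 H2]; unfold pdx.
  f_equal; apply is_derive_unique; assumption.
Qed.
Lemma is_pdy_unique f z l : is_pdy f z l -> pdy f z = l.
Proof.
  destruct l as [l1 l2]; intros [H1 H2]; unfold pdy.
  f_equal; apply is_derive_unique; assumption.
Qed.

Lemma is_pd_has_partials f z lx ly : is_pdx f z lx -> is_pdy f z ly -> has_partials f z.
Proof. intros [H1 H2] [H3 H4]; repeat split; eexists; eassumption. Qed.

Lemma is_pd_zero_const (f : C -> C) :
  (forall z, is_pdx f z (RtoC 0) /\ is_pdy f z (RtoC 0)) -> forall z, f z = f (RtoC 0).
Proof.
  intros H [x y].
  assert (Hconst : forall g : R -> R, (forall t, is_derive g t 0) -> forall a b, g a = g b).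
  { intros g Hg a b. destruct (Rtotal_order a b) as [h | [-> | h]]; try reflexivity;
      [|symmetry]; apply (eq_is_derive g); auto. }
  apply injective_projections; unfold RtoC; simpl.
  - change (Re (f (x, y)) = Re (f (0, 0))).
    rewrite (Hconst (fun t => Re (f (x, t))) (fun t => proj1 (proj2 (H (x, t)))) y 0).
    exact (Hconst (fun t => Re (f (t, 0))) (fun t => proj1 (proj1 (H (t, 0)))) x 0).
  - change (Im (f (x, y)) = Im (f (0, 0))).
    rewrite (Hconst (fun t => Im (f (x, t))) (fun t => proj2 (proj2 (H (x, t)))) y 0).
    exact (Hconst (fun t => Im (f (t, 0))) (fun t => proj2 (proj1 (H (t, 0)))) x 0).
Qed.

Ltac C_lra :=
  intros;
  repeat match goal with c : C |- _ => destruct c end;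
  unfold Cminus, Iu, Cmult, Cplus, Copp, RtoC, Re, Im in *; simpl in *;
  repeat match goal with H : (_, _) = (_, _) |- _ => injection H; clear H; intros end;
  apply injective_projections; simpl; lra.

Lemma wd_is_pd f z lx ly : is_pdx f z lx -> is_pdy f z ly ->
  wd f z = Cmult (/ 2)%R (Cminus lx (Cmult Iu ly)).
Proof.
  intros Hx Hy; unfold wd; rewrite (is_pdx_unique _ _ _ Hx), (is_pdy_unique _ _ _ Hy); reflexivity.
Qed.
Lemma wdbar_is_pd f z lx ly : is_pdx f z lx -> is_pdy f z ly ->
  wdbar f z = Cmult (/ 2)%R (Cplus lx (Cmult Iu ly)).
Proof.
  intros Hx Hy; unfold wdbar; rewrite (is_pdx_unique _ _ _ Hx), (is_pdy_unique _ _ _ Hy); reflexivity.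
Qed.

Lemma has_partials_mult f g z : has_partials f z -> has_partials g z ->
  has_partials (fun w => Cmult (f w) (g w)) z.
Proof.
  intros Hf Hg; eapply is_pd_has_partials.
  - apply is_pdx_mult; apply has_partials_is_pdx; eassumption.
  - apply is_pdy_mult; apply has_partials_is_pdy; eassumption.
Qed.

Lemma wd_mult f g z : has_partials f z -> has_partials g z ->
  wd (fun w => Cmult (f w) (g w)) z = Cplus (Cmult (wd f z) (g z)) (Cmult (f z) (wd g z)).
Proof.
  intros Hf Hg.
  rewrite (wd_is_pd _ _ _ _
             (is_pdx_mult _ _ _ _ _ (has_partials_is_pdx _ _ Hf) (has_partials_is_pdx _ _ Hg))
             (is_pdy_mult _ _ _ _ _ (has_partials_is_pdy _ _ Hf) (has_partials_is_pdy _ _ Hg))).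
  unfold wd; ring.
Qed.
Lemma wdbar_mult f g z : has_partials f z -> has_partials g z ->
  wdbar (fun w => Cmult (f w) (g w)) z = Cplus (Cmult (wdbar f z) (g z)) (Cmult (f z) (wdbar g z)).
Proof.
  intros Hf Hg.
  rewrite (wdbar_is_pd _ _ _ _
             (is_pdx_mult _ _ _ _ _ (has_partials_is_pdx _ _ Hf) (has_partials_is_pdx _ _ Hg))
             (is_pdy_mult _ _ _ _ _ (has_partials_is_pdy _ _ Hf) (has_partials_is_pdy _ _ Hg))).
  unfold wdbar; ring.
Qed.
Lemma wd_opp f z : has_partials f z -> wd (fun w => Copp (f w)) z = Copp (wd f z).
Proof.
  intros Hf.
  rewrite (wd_is_pd _ _ _ _ (is_pdx_opp _ _ _ (has_partials_is_pdx _ _ Hf))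
                            (is_pdy_opp _ _ _ (has_partials_is_pdy _ _ Hf))).
  unfold wd; ring.
Qed.

(* [a dz + b dzbar = (a + b) dx + i (a - b) dy]. *)
Lemma is_prim_iff (a b w : C -> C) :
  is_prim a b w <->
  forall z, is_pdx w z (Cplus (a z) (b z)) /\ is_pdy w z (Cmult Iu (Cplus (a z) (Copp (b z)))).
Proof.
  split; intros H z.
  - destruct (H z) as [Hx [Ha Hb]]; split.
    + eapply is_pdx_eq; [apply has_partials_is_pdx, Hx|].
      rewrite <- Ha, <- Hb; unfold wd, wdbar; C_lra.
    + eapply is_pdy_eq; [apply has_partials_is_pdy, Hx|].
      rewrite <- Ha, <- Hb; unfold wd, wdbar; C_lra.
  - destruct (H z) as [Hx Hy]; split; [eapply is_pd_has_partials; eassumption|].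
    rewrite (wd_is_pd _ _ _ _ Hx Hy), (wdbar_is_pd _ _ _ _ Hx Hy); split; C_lra.
Qed.

Definition continuous_2d (f : C -> C) : Prop := forall u v,
  continuity_2d_pt (fun u v => Re (f (u, v))) u v /\
  continuity_2d_pt (fun u v => Im (f (u, v))) u v.

Lemma continuous_2d_of_continuous (f : C -> C) : (forall z, continuous f z) -> continuous_2d f.
Proof.
  intros H u v.
  assert (K : forall eps : posreal, exists d : posreal, forall a b,
             Rabs (a - u) < d -> Rabs (b - v) < d ->
             Rabs (Re (f (a, b)) - Re (f (u, v))) < eps /\ Rabs (Im (f (a, b)) - Im (f (u, v))) < eps).
  { intros eps. destruct (proj1 (filterlim_locally _ _) (H (u, v)) eps) as [d Hd].
    exists d; intros a b Ha Hb; apply (Hd (a, b)); split; assumption. }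
  split; intros eps; destruct (K eps) as [d Hd]; exists d; intros a b Ha Hb; apply (Hd a b Ha Hb).
Qed.

Lemma continuous_2d_const c : continuous_2d (fun _ => c).
Proof. intros u v; split; apply continuity_2d_pt_const. Qed.

Lemma continuous_2d_plus f g : continuous_2d f -> continuous_2d g ->
  continuous_2d (fun z => Cplus (f z) (g z)).
Proof.
  intros Hf Hg u v; destruct (Hf u v), (Hg u v); split;
    apply continuity_2d_pt_plus; assumption.
Qed.

Lemma continuous_2d_opp f : continuous_2d f -> continuous_2d (fun z => Copp (f z)).
Proof. intros Hf u v; destruct (Hf u v); split; apply continuity_2d_pt_opp; assumption. Qed.

Lemma continuous_2d_mult f g : continuous_2d f -> continuous_2d g ->
  continuous_2d (fun z => Cmult (f z) (g z)).
Proof.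
  intros Hf Hg u v; destruct (Hf u v), (Hg u v); split.
  - apply continuity_2d_pt_minus; apply continuity_2d_pt_mult; assumption.
  - apply continuity_2d_pt_plus; apply continuity_2d_pt_mult; assumption.
Qed.

Definition C1 (f : C -> C) : Prop :=
  (forall z, has_partials f z) /\ continuous_2d f /\ continuous_2d (pdx f) /\ continuous_2d (pdy f).

Lemma smooth_has_partials f z : smooth f -> has_partials f z.
Proof. intros Hf; exact (proj1 (Hf nil z)). Qed.

Lemma smooth_C1 f : smooth f -> C1 f.
Proof.
  intros H; split; [|split; [|split]].
  - intros z; apply smooth_has_partials, H.
  - apply continuous_2d_of_continuous; intros z; exact (proj2 (H nil z)).
  - apply continuous_2d_of_continuous; intros z; exact (proj2 (H (cons true nil) z)).
  - apply continuous_2d_of_continuous; intros z; exact (proj2 (H (cons false nil) z)).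
Qed.

Lemma C1_intro f (fx fy : C -> C) :
  (forall z, is_pdx f z (fx z) /\ is_pdy f z (fy z)) ->
  continuous_2d f -> continuous_2d fx -> continuous_2d fy -> C1 f.
Proof.
  intros Hd Hc Hcx Hcy.
  assert (Ex : pdx f = fx) by (apply functional_extensionality; intros z; apply is_pdx_unique, Hd).
  assert (Ey : pdy f = fy) by (apply functional_extensionality; intros z; apply is_pdy_unique, Hd).
  split; [|split; [|split]]; [intros z; destruct (Hd z); eapply is_pd_has_partials; eassumption
                | assumption | rewrite Ex; assumption | rewrite Ey; assumption].
Qed.

Lemma C1_const c : C1 (fun _ => c).
Proof.
  apply (C1_intro _ (fun _ => RtoC 0) (fun _ => RtoC 0)); [|apply continuous_2d_const ..].
  intros z; split; [apply is_pdx_const | apply is_pdy_const].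
Qed.

Lemma C1_plus f g : C1 f -> C1 g -> C1 (fun z => Cplus (f z) (g z)).
Proof.
  intros [hf [cf [cfx cfy]]] [hg [cg [cgx cgy]]].
  apply (C1_intro _ (fun z => Cplus (pdx f z) (pdx g z)) (fun z => Cplus (pdy f z) (pdy g z)));
    [|apply continuous_2d_plus; assumption ..].
  intros z; split.
  - apply is_pdx_plus; apply has_partials_is_pdx; auto.
  - apply is_pdy_plus; apply has_partials_is_pdy; auto.
Qed.

Lemma C1_opp f : C1 f -> C1 (fun z => Copp (f z)).
Proof.
  intros [hf [cf [cfx cfy]]].
  apply (C1_intro _ (fun z => Copp (pdx f z)) (fun z => Copp (pdy f z)));
    [|apply continuous_2d_opp; assumption ..].
  intros z; split; [apply is_pdx_opp, has_partials_is_pdx | apply is_pdy_opp, has_partials_is_pdy]; auto.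
Qed.

Lemma C1_mult f g : C1 f -> C1 g -> C1 (fun z => Cmult (f z) (g z)).
Proof.
  intros [hf [cf [cfx cfy]]] [hg [cg [cgx cgy]]].
  apply (C1_intro _ (fun z => Cplus (Cmult (pdx f z) (g z)) (Cmult (f z) (pdx g z)))
                    (fun z => Cplus (Cmult (pdy f z) (g z)) (Cmult (f z) (pdy g z))));
    [| apply continuous_2d_mult; assumption
     | apply continuous_2d_plus; apply continuous_2d_mult; assumption ..].
  intros z; split.
  - apply is_pdx_mult; apply has_partials_is_pdx; auto.
  - apply is_pdy_mult; apply has_partials_is_pdy; auto.
Qed.

Lemma continuity_2d_pt_slice_x f x y : continuity_2d_pt f x y -> continuous (fun t => f t y) x.
Proof.
  intros H; apply filterlim_locally; intros eps.
  destruct (H eps) as [d Hd]; exists d; intros t Ht.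
  apply Hd; [exact Ht | rewrite Rminus_eq_0, Rabs_R0; apply cond_pos].
Qed.

Lemma continuity_2d_pt_slice_y f x y : continuity_2d_pt f x y -> continuous (fun t => f x t) y.
Proof.
  intros H; apply filterlim_locally; intros eps.
  destruct (H eps) as [d Hd]; exists d; intros t Ht.
  apply Hd; [rewrite Rminus_eq_0, Rabs_R0; apply cond_pos | exact Ht].
Qed.

Lemma is_derive_RInt_0 (f : R -> R) (x : R) :
  (forall t, continuous f t) -> is_derive (fun b => RInt f 0 b) x (f x).
Proof.
  intros Hf; apply (is_derive_RInt f (fun b => RInt f 0 b) 0 x); [|apply Hf].
  apply filter_forall; intros b.
  apply (@RInt_correct R_CompleteNormedModule), (@ex_RInt_continuous R_CompleteNormedModule).
  intros; apply Hf.
Qed.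

Section RealPoincare.

Variables P Q : R -> R -> R.
Hypothesis P_cont : forall u v, continuity_2d_pt P u v.
Hypothesis Q_cont : forall u v, continuity_2d_pt Q u v.
Hypothesis Q_dx : forall u v, ex_derive (fun t => Q t v) u.
Hypothesis P_dy : forall u v, ex_derive (fun t => P u t) v.
Hypothesis Q_dx_cont : forall u v, continuity_2d_pt (fun u v => Derive (fun t => Q t v) u) u v.
Hypothesis PQ_closed : forall u v, Derive (fun t => Q t v) u = Derive (fun t => P u t) v.

Let potential (x y : R) : R := RInt (fun t => P t 0) 0 x + RInt (fun s => Q x s) 0 y.

Lemma potential_dx x y : is_derive (fun t => potential t y) x (P x y).
Proof.
  (* differentiate under the integral sign, then use the closedness in [v] *)
  assert (HQ : is_derive (fun t => RInt (fun s => Q t s) 0 y) x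
                         (RInt (fun s => Derive (fun t => P x t) s) 0 y)).
  { rewrite <- (RInt_ext (fun s => Derive (fun t => Q t s) x)) by (intros; apply PQ_closed).
    apply (is_derive_RInt_param Q 0 y x).
    - apply filter_forall; intros; apply Q_dx.
    - intros; apply Q_dx_cont.
    - apply filter_forall; intros.
      apply (@ex_RInt_continuous R_CompleteNormedModule); intros.
      apply continuity_2d_pt_slice_y, Q_cont. }
  assert (HP : RInt (fun s => Derive (fun t => P x t) s) 0 y = P x y - P x 0).
  { apply RInt_Derive; [intros; apply P_dy|].
    intros s _.
    replace (Derive (fun t => P x t)) with (fun s => Derive (fun t => Q t s) x)
      by (apply functional_extensionality; intros; apply PQ_closed).
    apply (continuity_2d_pt_slice_y (fun u v => Derive (fun t => Q t v) u)), Q_dx_cont. }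
  unfold potential; eapply is_derive_eq.
  - apply is_derive_plus_R; [|exact HQ].
    apply is_derive_RInt_0; intros; apply continuity_2d_pt_slice_x, P_cont.
  - rewrite HP; ring.
Qed.

Lemma potential_dy x y : is_derive (fun t => potential x t) y (Q x y).
Proof.
  unfold potential; eapply is_derive_eq.
  - apply is_derive_plus_R; [apply is_derive_const_R|].
    apply is_derive_RInt_0; intros; apply continuity_2d_pt_slice_y, Q_cont.
  - ring.
Qed.

End RealPoincare.

Lemma exists_potential (A B : C -> C) :
  C1 A -> C1 B -> (forall z, pdx B z = pdy A z) ->
  exists W : C -> C, forall z, is_pdx W z (A z) /\ is_pdy W z (B z).
Proof.
  intros [hA [cA _]] [hB [cB [cBx _]]] Hclosed.
  pose (Pre u v := Re (A (u, v))); pose (Qre u v := Re (B (u, v))).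
  pose (Pim u v := Im (A (u, v))); pose (Qim u v := Im (B (u, v))).
  assert (Hre := potential_dx Pre Qre (fun u v => proj1 (cA u v)) (fun u v => proj1 (cB u v))
                   (fun u v => proj1 (hB (u, v)))
                   (fun u v => proj1 (proj2 (proj2 (hA (u, v))))) (fun u v => proj1 (cBx u v))
                   (fun u v => f_equal Re (Hclosed (u, v)))).
  assert (Him := potential_dx Pim Qim (fun u v => proj2 (cA u v)) (fun u v => proj2 (cB u v))
                   (fun u v => proj1 (proj2 (hB (u, v))))
                   (fun u v => proj2 (proj2 (proj2 (hA (u, v))))) (fun u v => proj2 (cBx u v))
                   (fun u v => f_equal Im (Hclosed (u, v)))).
  assert (Hre' := potential_dy Pre Qre (fun u v => proj1 (cB u v))).
  assert (Him' := potential_dy Pim Qim (fun u v => proj2 (cB u v))).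
  exists (fun z => (RInt (fun t => Pre t 0) 0 (Re z) + RInt (fun s => Qre (Re z) s) 0 (Im z),
                    RInt (fun t => Pim t 0) 0 (Re z) + RInt (fun s => Qim (Re z) s) 0 (Im z))).
  intros [x y]; split; split; [apply Hre | apply Him | apply Hre' | apply Him'].
Qed.

Lemma mult_fixed_neq1 (m c : C) : m <> RtoC 1 -> Cmult m c = c -> c = RtoC 0.
Proof.
  intros Hm Hc.
  assert (Hm1 : Cminus m (RtoC 1) <> RtoC 0) by (intros E; apply Hm; C_lra).
  replace c with (Cmult (Cminus (Cmult m c) c) (Cinv (Cminus m (RtoC 1)))) by (field; exact Hm1).
  rewrite Hc; ring.
Qed.

Lemma is_prim_floquet_unique (g1 g2 m1 m2 : C) (a b w w' : C -> C) :
  (m1 <> RtoC 1 \/ m2 <> RtoC 1) ->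
  is_prim a b w -> floquet1 g1 g2 m1 m2 w ->
  is_prim a b w' -> floquet1 g1 g2 m1 m2 w' -> w = w'.
Proof.
  intros Hm Hw Fw Hw' Fw'.
  pose (D z := Cminus (w z) (w' z)).
  assert (HD : forall z, D z = D (RtoC 0)).
  { apply is_pd_zero_const; intros z.
    destruct (proj1 (is_prim_iff _ _ _) Hw z) as [x1 y1].
    destruct (proj1 (is_prim_iff _ _ _) Hw' z) as [x2 y2]; split.
    - eapply is_pdx_eq; [apply is_pdx_plus; [exact x1 | apply is_pdx_opp; exact x2] | ring].
    - eapply is_pdy_eq; [apply is_pdy_plus; [exact y1 | apply is_pdy_opp; exact y2] | ring]. }
  assert (HD0 : D (RtoC 0) = RtoC 0).
  { destruct Hm as [Hm | Hm]; apply (mult_fixed_neq1 _ _ Hm).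
    - rewrite <- (HD (Cplus (RtoC 0) g1)) at 2; unfold D.
      rewrite (proj1 (Fw _)), (proj1 (Fw' _)); ring.
    - rewrite <- (HD (Cplus (RtoC 0) g2)) at 2; unfold D.
      rewrite (proj2 (Fw _)), (proj2 (Fw' _)); ring. }
  apply functional_extensionality; intros z.
  assert (E : D z = RtoC 0) by (rewrite HD; exact HD0).
  unfold D in E; C_lra.
Qed.

Lemma is_pd_translate (W A B : C -> C) (g m : C) :
  (forall z, is_pdx W z (A z) /\ is_pdy W z (B z)) ->
  (forall z, A (Cplus z g) = Cmult m (A z)) -> (forall z, B (Cplus z g) = Cmult m (B z)) ->
  exists c, forall z, W (Cplus z g) = Cplus (Cmult m (W z)) c.
Proof.
  intros HW HA HB.
  pose (D z := Cminus (W (Cplus z g)) (Cmult m (W z))).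
  assert (HD : forall z, D z = D (RtoC 0)).
  { apply is_pd_zero_const; intros z.
    destruct (HW (Cplus z g)) as [x1 y1]; destruct (HW z) as [x2 y2]; split.
    - eapply is_pdx_eq.
      + apply is_pdx_plus; [apply is_pdx_shift; exact x1|].
        apply is_pdx_opp, is_pdx_mult; [apply is_pdx_const | exact x2].
      + rewrite HA; ring.
    - eapply is_pdy_eq.
      + apply is_pdy_plus; [apply is_pdy_shift; exact y1|].
        apply is_pdy_opp, is_pdy_mult; [apply is_pdy_const | exact y2].
      + rewrite HB; ring. }
  exists (D (RtoC 0)); intros z; rewrite <- (HD z); unfold D; ring.
Qed.

(* The translations by [g1] and [g2] commute, which forces [(m2 - 1) c1 = (m1 - 1) c2]. *)
Lemma affine_quasi_periodic_floquet (W : C -> C) (g1 g2 m1 m2 c1 c2 : C) :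
  m1 <> RtoC 1 ->
  (forall z, W (Cplus z g1) = Cplus (Cmult m1 (W z)) c1) ->
  (forall z, W (Cplus z g2) = Cplus (Cmult m2 (W z)) c2) ->
  floquet1 g1 g2 m1 m2 (fun z => Cplus (W z) (Cdiv c1 (Cminus m1 (RtoC 1)))).
Proof.
  intros Hm H1 H2.
  assert (Hm1 : Cminus m1 (RtoC 1) <> RtoC 0) by (intros E; apply Hm; C_lra).
  assert (Hcompat : Cmult (Cminus m2 (RtoC 1)) c1 = Cmult (Cminus m1 (RtoC 1)) c2).
  { assert (E := H2 (Cplus (RtoC 0) g1)); rewrite H1 in E.
    replace (Cplus (Cplus (RtoC 0) g1) g2) with (Cplus (Cplus (RtoC 0) g2) g1) in E by ring.
    rewrite H1, H2 in E.
    apply (f_equal (fun t => Cminus t (Cmult (Cmult m1 m2) (W (RtoC 0))))) in E.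
    ring_simplify in E; C_lra. }
  intros z; rewrite H1, H2; split; [field; exact Hm1|].
  replace c2 with (Cdiv (Cmult (Cminus m2 (RtoC 1)) c1) (Cminus m1 (RtoC 1)))
    by (rewrite Hcompat; field; exact Hm1).
  field; exact Hm1.
Qed.

Lemma is_prim_floquet_exists (g1 g2 m1 m2 : C) (a b : C -> C) :
  (m1 <> RtoC 1 \/ m2 <> RtoC 1) ->
  C1 a -> C1 b -> (forall z, wdbar a z = wd b z) ->
  floquet1 g1 g2 m1 m2 a -> floquet1 g1 g2 m1 m2 b ->
  exists w, is_prim a b w /\ floquet1 g1 g2 m1 m2 w.
Proof.
  intros Hm Ca Cb Hclosed Fa Fb.
  pose (A z := Cplus (a z) (b z)); pose (B z := Cmult Iu (Cplus (a z) (Copp (b z)))).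
  assert (CA : C1 A) by (apply C1_plus; assumption).
  assert (CB : C1 B).
  { apply (C1_mult (fun _ => Iu)); [apply C1_const | apply C1_plus; [|apply C1_opp]; assumption]. }
  assert (HAB : forall z, pdx B z = pdy A z).
  { intros z.
    destruct Ca as [ha _], Cb as [hb _].
    rewrite (is_pdx_unique B z _ (is_pdx_mult _ _ _ _ _ (is_pdx_const Iu z)
              (is_pdx_plus _ _ _ _ _ (has_partials_is_pdx _ _ (ha z))
                 (is_pdx_opp _ _ _ (has_partials_is_pdx _ _ (hb z)))))).
    rewrite (is_pdy_unique A z _ (is_pdy_plus _ _ _ _ _ (has_partials_is_pdy _ _ (ha z))
                                     (has_partials_is_pdy _ _ (hb z)))).
    generalize (Hclosed z); unfold wd, wdbar; C_lra. }
  destruct (exists_potential A B CA CB HAB) as [W HW].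
  destruct (is_pd_translate W A B g1 m1 HW) as [c1 H1];
    [intros z; unfold A, B; rewrite (proj1 (Fa z)), (proj1 (Fb z)); ring .. |].
  destruct (is_pd_translate W A B g2 m2 HW) as [c2 H2];
    [intros z; unfold A, B; rewrite (proj2 (Fa z)), (proj2 (Fb z)); ring .. |].
  assert (Hc : exists c, floquet1 g1 g2 m1 m2 (fun z => Cplus (W z) c)).
  { destruct Hm as [Hm | Hm].
    - eexists; exact (affine_quasi_periodic_floquet W g1 g2 m1 m2 c1 c2 Hm H1 H2).
    - eexists; intros z; apply and_comm, (affine_quasi_periodic_floquet W g2 g1 m2 m1 c2 c1 Hm H2 H1). }
  destruct Hc as [c Hc]; exists (fun z => Cplus (W z) c); split; [|exact Hc].
  apply is_prim_iff; intros z; destruct (HW z) as [Hx Hy]; split.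
  - eapply is_pdx_eq; [apply is_pdx_plus; [exact Hx | apply is_pdx_const] | unfold A; ring].
  - eapply is_pdy_eq; [apply is_pdy_plus; [exact Hy | apply is_pdy_const] | unfold B; ring].
Qed.

Lemma floquet1_mult {g1 g2 m1 m2 n1 n2 r1 r2 : C} {f h : C -> C} :
  floquet1 g1 g2 m1 m2 f -> floquet1 g1 g2 n1 n2 h ->
  Cmult m1 n1 = r1 -> Cmult m2 n2 = r2 ->
  floquet1 g1 g2 r1 r2 (fun z => Cmult (f z) (h z)).
Proof.
  intros Ff Fh <- <- z.
  rewrite (proj1 (Ff z)), (proj2 (Ff z)), (proj1 (Fh z)), (proj2 (Fh z)); split; ring.
Qed.

Lemma floquet1_opp {g1 g2 m1 m2 : C} {f : C -> C} :
  floquet1 g1 g2 m1 m2 f -> floquet1 g1 g2 m1 m2 (fun z => Copp (f z)).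
Proof. intros Ff z; rewrite (proj1 (Ff z)), (proj2 (Ff z)); split; ring. Qed.

Lemma floquet1_periodic (g1 g2 : C) (f : C -> C) :
  floquet1 g1 g2 (RtoC 1) (RtoC 1) f -> periodic g1 g2 f.
Proof. intros Ff z; rewrite (proj1 (Ff z)), (proj2 (Ff z)); split; ring. Qed.

Lemma solves_L_eqs (p q f1 f2 : C -> C) : solves_L p q f1 f2 ->
  forall z, wdbar f1 z = Cmult (p z) (f2 z) /\ wd f2 z = Cmult (q z) (f1 z).
Proof.
  intros [_ [_ H]] z; destruct (H z) as [H1 H2]; unfold L1, L2 in *.
  split; [revert H1 | revert H2]; C_lra.
Qed.

Lemma solves_Lv_eqs (p q f1 f2 : C -> C) : solves_Lv p q f1 f2 ->
  forall z, wdbar f1 z = Copp (Cmult (q z) (f2 z)) /\ wd f2 z = Copp (Cmult (p z) (f1 z)).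
Proof.
  intros [_ [_ H]] z; destruct (H z) as [H1 H2]; unfold Lv1, Lv2 in *.
  split; [revert H1 | revert H2]; C_lra.
Qed.

Section Variation.

Variables (p q PsiD1 PsiD2 PhiD1 PhiD2 : C -> C).
Hypothesis HPsi : solves_L p q PsiD1 PsiD2.
Hypothesis HPhi : solves_Lv p q PhiD1 PhiD2.

Lemma variation_L_solves (psi1 psi2 omega : C -> C) :
  is_prim (fun z => Cmult (PhiD1 z) (psi1 z)) (fun z => Copp (Cmult (PhiD2 z) (psi2 z))) omega ->
  forall z,
    Cplus (L1 p q (fun z => Cmult (omega z) (PsiD1 z)) (fun z => Cmult (omega z) (PsiD2 z)) z)
          (Cmult (Cmult (PsiD1 z) (PhiD2 z)) (psi2 z)) = RtoC 0 /\
    Cplus (L2 p q (fun z => Cmult (omega z) (PsiD1 z)) (fun z => Cmult (omega z) (PsiD2 z)) z)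
          (Copp (Cmult (Cmult (PsiD2 z) (PhiD1 z)) (psi1 z))) = RtoC 0.
Proof.
  intros Hprim z; destruct (Hprim z) as [Hw [Ha Hb]]; destruct (solves_L_eqs _ _ _ _ HPsi z) as [E1 E2].
  destruct HPsi as [S1 [S2 _]].
  unfold L1, L2; rewrite wdbar_mult, wd_mult, Ha, Hb, E1, E2
    by (exact Hw || apply smooth_has_partials; assumption).
  split; ring.
Qed.

Lemma variation_Lv_solves (phi1 phi2 omegav : C -> C) :
  is_prim (fun z => Cmult (phi1 z) (PsiD1 z)) (fun z => Copp (Cmult (phi2 z) (PsiD2 z))) omegav ->
  forall z,
    Cplus (Lv1 p q (fun z => Cmult (omegav z) (PhiD1 z)) (fun z => Cmult (omegav z) (PhiD2 z)) z)
          (Copp (Cmult (Cmult (PsiD2 z) (PhiD1 z)) (phi2 z))) = RtoC 0 /\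
    Cplus (Lv2 p q (fun z => Cmult (omegav z) (PhiD1 z)) (fun z => Cmult (omegav z) (PhiD2 z)) z)
          (Cmult (Cmult (PsiD1 z) (PhiD2 z)) (phi1 z)) = RtoC 0.
Proof.
  intros Hprim z; destruct (Hprim z) as [Hw [Ha Hb]]; destruct (solves_Lv_eqs _ _ _ _ HPhi z) as [E1 E2].
  destruct HPhi as [S1 [S2 _]].
  unfold Lv1, Lv2; rewrite wdbar_mult, wd_mult, Ha, Hb, E1, E2
    by (exact Hw || apply smooth_has_partials; assumption).
  split; ring.
Qed.

Lemma form_L_closed (psi1 psi2 : C -> C) : solves_L p q psi1 psi2 ->
  forall z, wdbar (fun z => Cmult (PhiD1 z) (psi1 z)) z =
            wd (fun z => Copp (Cmult (PhiD2 z) (psi2 z))) z.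
Proof.
  intros Hpsi z; destruct (solves_L_eqs _ _ _ _ Hpsi z) as [E1 E2].
  destruct (solves_Lv_eqs _ _ _ _ HPhi z) as [F1 F2].
  destruct Hpsi as [S1 [S2 _]], HPhi as [T1 [T2 _]].
  rewrite wd_opp by (apply has_partials_mult; apply smooth_has_partials; assumption).
  rewrite wdbar_mult, wd_mult, E1, E2, F1, F2 by (apply smooth_has_partials; assumption).
  ring.
Qed.

Lemma form_Lv_closed (phi1 phi2 : C -> C) : solves_Lv p q phi1 phi2 ->
  forall z, wdbar (fun z => Cmult (phi1 z) (PsiD1 z)) z =
            wd (fun z => Copp (Cmult (phi2 z) (PsiD2 z))) z.
Proof.
  intros Hphi z; destruct (solves_Lv_eqs _ _ _ _ Hphi z) as [E1 E2].
  destruct (solves_L_eqs _ _ _ _ HPsi z) as [F1 F2].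
  destruct Hphi as [S1 [S2 _]], HPsi as [T1 [T2 _]].
  rewrite wd_opp by (apply has_partials_mult; apply smooth_has_partials; assumption).
  rewrite wdbar_mult, wd_mult, E1, E2, F1, F2 by (apply smooth_has_partials; assumption).
  ring.
Qed.

Variables (g1 g2 kh1 kh2 : C).
Hypotheses (kh1_neq0 : kh1 <> RtoC 0) (kh2_neq0 : kh2 <> RtoC 0).
Hypotheses (FPsi1 : floquet1 g1 g2 kh1 kh2 PsiD1) (FPsi2 : floquet1 g1 g2 kh1 kh2 PsiD2).
Hypotheses (FPhi1 : floquet1 g1 g2 (Cinv kh1) (Cinv kh2) PhiD1)
           (FPhi2 : floquet1 g1 g2 (Cinv kh1) (Cinv kh2) PhiD2).

Lemma variation_L_floquet (k1 k2 : C) (psi1 psi2 : C -> C) :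
  let a := fun z => Cmult (PhiD1 z) (psi1 z) in
  let b := fun z => Copp (Cmult (PhiD2 z) (psi2 z)) in
  floquet_L g1 g2 p q k1 k2 psi1 psi2 ->
  (Cdiv k1 kh1 <> RtoC 1 \/ Cdiv k2 kh2 <> RtoC 1) ->
  (exists omega, is_prim a b omega /\ floquet1 g1 g2 (Cdiv k1 kh1) (Cdiv k2 kh2) omega) /\
  (forall omega omega',
     is_prim a b omega -> floquet1 g1 g2 (Cdiv k1 kh1) (Cdiv k2 kh2) omega ->
     is_prim a b omega' -> floquet1 g1 g2 (Cdiv k1 kh1) (Cdiv k2 kh2) omega' -> omega = omega') /\
  (forall omega,
     is_prim a b omega -> floquet1 g1 g2 (Cdiv k1 kh1) (Cdiv k2 kh2) omega ->
     floquet1 g1 g2 k1 k2 (fun z => Cmult (omega z) (PsiD1 z)) /\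
     floquet1 g1 g2 k1 k2 (fun z => Cmult (omega z) (PsiD2 z))).
Proof.
  intros a b [Hpsi [_ [_ [_ [F1 F2]]]]] Hm.
  pose proof Hpsi as [S1 [S2 _]]; pose proof HPhi as [T1 [T2 _]].
  assert (Fa : floquet1 g1 g2 (Cdiv k1 kh1) (Cdiv k2 kh2) a)
    by (apply (floquet1_mult FPhi1 F1); unfold Cdiv; ring).
  assert (Fb : floquet1 g1 g2 (Cdiv k1 kh1) (Cdiv k2 kh2) b)
    by (apply floquet1_opp, (floquet1_mult FPhi2 F2); unfold Cdiv; ring).
  split; [|split].
  - apply is_prim_floquet_exists; try assumption.
    + apply C1_mult; apply smooth_C1; assumption.
    + apply C1_opp, C1_mult; apply smooth_C1; assumption.
    + apply form_L_closed; assumption.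
  - intros omega omega'; apply is_prim_floquet_unique; exact Hm.
  - intros omega _ Fw; split; [apply (floquet1_mult Fw FPsi1) | apply (floquet1_mult Fw FPsi2)];
      unfold Cdiv; field; assumption.
Qed.

Lemma variation_Lv_floquet (kv1 kv2 : C) (phi1 phi2 : C -> C) :
  let a := fun z => Cmult (phi1 z) (PsiD1 z) in
  let b := fun z => Copp (Cmult (phi2 z) (PsiD2 z)) in
  floquet_Lv g1 g2 p q kv1 kv2 phi1 phi2 ->
  (Cmult kv1 kh1 <> RtoC 1 \/ Cmult kv2 kh2 <> RtoC 1) ->
  (exists omegav, is_prim a b omegav /\ floquet1 g1 g2 (Cmult kv1 kh1) (Cmult kv2 kh2) omegav) /\
  (forall omegav omegav',
     is_prim a b omegav -> floquet1 g1 g2 (Cmult kv1 kh1) (Cmult kv2 kh2) omegav ->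
     is_prim a b omegav' -> floquet1 g1 g2 (Cmult kv1 kh1) (Cmult kv2 kh2) omegav' ->
     omegav = omegav') /\
  (forall omegav,
     is_prim a b omegav -> floquet1 g1 g2 (Cmult kv1 kh1) (Cmult kv2 kh2) omegav ->
     floquet1 g1 g2 kv1 kv2 (fun z => Cmult (omegav z) (PhiD1 z)) /\
     floquet1 g1 g2 kv1 kv2 (fun z => Cmult (omegav z) (PhiD2 z))).
Proof.
  intros a b [Hphi [_ [_ [_ [F1 F2]]]]] Hm.
  pose proof Hphi as [S1 [S2 _]]; pose proof HPsi as [T1 [T2 _]].
  assert (Fa : floquet1 g1 g2 (Cmult kv1 kh1) (Cmult kv2 kh2) a)
    by exact (floquet1_mult F1 FPsi1 eq_refl eq_refl).
  assert (Fb : floquet1 g1 g2 (Cmult kv1 kh1) (Cmult kv2 kh2) b)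
    by exact (floquet1_opp (floquet1_mult F2 FPsi2 eq_refl eq_refl)).
  split; [|split].
  - apply is_prim_floquet_exists; try assumption.
    + apply C1_mult; apply smooth_C1; assumption.
    + apply C1_opp, C1_mult; apply smooth_C1; assumption.
    + apply form_Lv_closed; assumption.
  - intros omegav omegav'; apply is_prim_floquet_unique; exact Hm.
  - intros omegav _ Fw; split; [apply (floquet1_mult Fw FPhi1) | apply (floquet1_mult Fw FPhi2)];
      field; assumption.
Qed.

End Variation.

Theorem theorem1
  (g1 g2 : C) (p q : C -> C) (kh1 kh2 : C)
  (PsiD1 PsiD2 PhiD1 PhiD2 : C -> C)
  (Hlat : lattice_gens g1 g2)
  (Hp : smooth p) (Hq : smooth q)
  (Hpper : periodic g1 g2 p) (Hqper : periodic g1 g2 q)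
  (HPsi : floquet_L g1 g2 p q kh1 kh2 PsiD1 PsiD2)
  (HPhi : floquet_Lv g1 g2 p q (Cinv kh1) (Cinv kh2) PhiD1 PhiD2) :
  let dp := fun z => Copp (Cmult (PsiD1 z) (PhiD2 z)) in
  let dq := fun z => Cmult (PsiD2 z) (PhiD1 z) in
  let dL1 := fun (psi1 psi2 : C -> C) z => Cmult (Cmult (PsiD1 z) (PhiD2 z)) (psi2 z) in
  let dL2 := fun (psi1 psi2 : C -> C) z => Copp (Cmult (Cmult (PsiD2 z) (PhiD1 z)) (psi1 z)) in
  let dLv1 := fun (phi1 phi2 : C -> C) z => Copp (Cmult (Cmult (PsiD2 z) (PhiD1 z)) (phi2 z)) in
  let dLv2 := fun (phi1 phi2 : C -> C) z => Cmult (Cmult (PsiD1 z) (PhiD2 z)) (phi1 z) in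
  let form_a := fun (psi1 : C -> C) z => Cmult (PhiD1 z) (psi1 z) in
  let form_b := fun (psi2 : C -> C) z => Copp (Cmult (PhiD2 z) (psi2 z)) in
  let formv_a := fun (phi1 : C -> C) z => Cmult (phi1 z) (PsiD1 z) in
  let formv_b := fun (phi2 : C -> C) z => Copp (Cmult (phi2 z) (PsiD2 z)) in
  (periodic g1 g2 dp /\ periodic g1 g2 dq) /\
  (forall psi1 psi2 omega : C -> C,
     solves_L p q psi1 psi2 ->
     is_prim (form_a psi1) (form_b psi2) omega ->
     let dpsi1 := fun z => Cmult (omega z) (PsiD1 z) in
     let dpsi2 := fun z => Cmult (omega z) (PsiD2 z) in
     forall z, Cplus (L1 p q dpsi1 dpsi2 z) (dL1 psi1 psi2 z) = RtoC 0 /\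
               Cplus (L2 p q dpsi1 dpsi2 z) (dL2 psi1 psi2 z) = RtoC 0) /\
  (forall phi1 phi2 omegav : C -> C,
     solves_Lv p q phi1 phi2 ->
     is_prim (formv_a phi1) (formv_b phi2) omegav ->
     let dphi1 := fun z => Cmult (omegav z) (PhiD1 z) in
     let dphi2 := fun z => Cmult (omegav z) (PhiD2 z) in
     forall z, Cplus (Lv1 p q dphi1 dphi2 z) (dLv1 phi1 phi2 z) = RtoC 0 /\
               Cplus (Lv2 p q dphi1 dphi2 z) (dLv2 phi1 phi2 z) = RtoC 0) /\
  (forall (k1 k2 : C) (psi1 psi2 : C -> C),
     floquet_L g1 g2 p q k1 k2 psi1 psi2 ->
     (Cdiv k1 kh1 <> RtoC 1 \/ Cdiv k2 kh2 <> RtoC 1) ->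
     (exists omega, is_prim (form_a psi1) (form_b psi2) omega /\
                    floquet1 g1 g2 (Cdiv k1 kh1) (Cdiv k2 kh2) omega) /\
     (forall omega omega',
        is_prim (form_a psi1) (form_b psi2) omega ->
        floquet1 g1 g2 (Cdiv k1 kh1) (Cdiv k2 kh2) omega ->
        is_prim (form_a psi1) (form_b psi2) omega' ->
        floquet1 g1 g2 (Cdiv k1 kh1) (Cdiv k2 kh2) omega' ->
        omega = omega') /\
     (forall omega,
        is_prim (form_a psi1) (form_b psi2) omega ->
        floquet1 g1 g2 (Cdiv k1 kh1) (Cdiv k2 kh2) omega ->
        floquet1 g1 g2 k1 k2 (fun z => Cmult (omega z) (PsiD1 z)) /\
        floquet1 g1 g2 k1 k2 (fun z => Cmult (omega z) (PsiD2 z)))) /\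
  (forall (kv1 kv2 : C) (phi1 phi2 : C -> C),
     floquet_Lv g1 g2 p q kv1 kv2 phi1 phi2 ->
     (Cmult kv1 kh1 <> RtoC 1 \/ Cmult kv2 kh2 <> RtoC 1) ->
     (exists omegav, is_prim (formv_a phi1) (formv_b phi2) omegav /\
                     floquet1 g1 g2 (Cmult kv1 kh1) (Cmult kv2 kh2) omegav) /\
     (forall omegav omegav',
        is_prim (formv_a phi1) (formv_b phi2) omegav ->
        floquet1 g1 g2 (Cmult kv1 kh1) (Cmult kv2 kh2) omegav ->
        is_prim (formv_a phi1) (formv_b phi2) omegav' ->
        floquet1 g1 g2 (Cmult kv1 kh1) (Cmult kv2 kh2) omegav' ->
        omegav = omegav') /\
     (forall omegav,
        is_prim (formv_a phi1) (formv_b phi2) omegav ->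
        floquet1 g1 g2 (Cmult kv1 kh1) (Cmult kv2 kh2) omegav ->
        floquet1 g1 g2 kv1 kv2 (fun z => Cmult (omegav z) (PhiD1 z)) /\
        floquet1 g1 g2 kv1 kv2 (fun z => Cmult (omegav z) (PhiD2 z)))).
Proof.
  cbv beta zeta.
  pose proof HPsi as [SPsi [_ [kh1_neq0 [kh2_neq0 [FPsi1 FPsi2]]]]].
  pose proof HPhi as [SPhi [_ [_ [_ [FPhi1 FPhi2]]]]].
  split; [split | split; [| split; [| split]]].
  - apply floquet1_periodic, floquet1_opp, (floquet1_mult FPsi1 FPhi2);
      field; assumption.
  - apply floquet1_periodic, (floquet1_mult FPsi2 FPhi1); field; assumption.
  - intros psi1 psi2 omega _; apply variation_L_solves; assumption.
  - intros phi1 phi2 omegav _; apply variation_Lv_solves; assumption.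
  - apply variation_L_floquet; assumption.
  - apply variation_Lv_floquet; assumption.
Qed.
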